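(* Assume $\mathrm{char}(K)\neq2,3,5$. Let $\phi$ be a $5\times5$ alternating matrix of linear forms in $x_1,\dots,x_5$ with $4\times4$ Pfaffians $p_1,\dots,p_5$. If $S(\phi)\neq0$ then the fifteen quartics $\{p_ip_j:1\le i\le j\le5\}$ are linearly independent.
   Context: $p_i=(-1)^{i+1}\mathrm{pf}(\phi^{\{i\}})$, where $\phi^{\{i\}}$ is obtained from $\phi$ by deleting the $i$th row and column. $S(\phi)=\det(\partial p_i/\partial x_j)_{i,j=1,\dots,5}$, a quintic form in $x_1,\dots,x_5$. *)

From HB Require Import structures.
From mathcomp Require Import all_boot all_order all_algebra.
From mathcomp Require Import mpoly.
Set Implicit Arguments. Unset Strict Implicit. Unset Printing Implicit Defensive.
Import GRing.Theory.
Local Open Scope ring_scope.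

Definition pf4 (R : comRingType) (M : 'M[R]_4) : R :=
  M 0 1 * M 2 3 - M 0 2 * M 1 3 + M 0 3 * M 1 2.

Definition del5 (R : Type) (phi : 'M[R]_5) (i : 'I_5) : 'M[R]_4 :=
  \matrix_(a < 4, b < 4) phi (lift i a) (lift i b).

(* p_i = (-1)^(i+1) pf(phi^{i}) with 1-based i; here i is 0-based, so
   the sign is (-1)^i. *)
Definition pfaff5 (R : comRingType) (phi : 'M[R]_5) (i : 'I_5) : R :=
  (-1) ^+ i * pf4 (del5 phi i).

Definition alternating (R : ringType) n (phi : 'M[R]_n) : Prop :=
  (forall i j, phi i j = - phi j i) /\ (forall i, phi i i = 0).

Definition Sinv (K : fieldType) (phi : 'M[{mpoly K[5]}]_5) : {mpoly K[5]} :=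
  \det (\matrix_(i < 5, j < 5) mderiv j (pfaff5 phi i)).

From HB Require Import structures.
From mathcomp Require Import all_boot all_order all_algebra.
From mathcomp Require Import mpoly.
Import GRing.Theory.
Local Open Scope ring_scope.

(* Differentiate a relation sum_{i,j} d_ij p_i p_j = 0 with respect to x_k:
   sum_m (sum_j (d_mj + d_jm) p_j) dp_m/dx_k = 0 for every k.  As the Jacobian
   matrix (dp_m/dx_k) has nonzero determinant S, its rows are independent over
   the polynomial ring, so every sum_j (d_mj + d_jm) p_j vanishes.  The same
   argument applied once more (with constant coefficients) gives
   d_mj + d_jm = 0, hence d_ij = 0 for i < j, and 2 d_ii = 0 on the diagonal.
   Only S(phi) != 0 and char K != 2 are used; the pattern of phi is irrelevant. *)

Section JacobianCriterion.
Variables (R : idomainType) (n : nat) (p : 'I_n -> {mpoly R[n]}).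

Definition jacobian : 'M[{mpoly R[n]}]_n := \matrix_(i < n, j < n) mderiv j (p i).

Hypothesis det_jacobian_neq0 : \det jacobian != 0.

Lemma jacobian_comb_eq0 (w : 'I_n -> {mpoly R[n]}) :
  (forall k, \sum_m w m * mderiv k (p m) = 0) -> forall m, w m = 0.
Proof.
move=> wJ0 m; pose v := \row_m0 w m0.
have vJ0 : v *m jacobian = 0.
  by apply/rowP => k; rewrite !mxE -[RHS](wJ0 k); apply: eq_bigr => i _; rewrite !mxE.
have v0 : v = 0.
  by apply: contraNeq det_jacobian_neq0 => vn0; apply/det0P; exists v.
by have := congr1 (fun u : 'rV_n => u 0 m) v0; rewrite !mxE.
Qed.

Lemma free_of_jacobian (e : 'I_n -> R) :
  \sum_j e j *: p j = 0 -> forall j, e j = 0.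
Proof.
move=> ep0 j; apply/eqP; rewrite -(mpolyC_eq0 n); apply/eqP.
apply: (jacobian_comb_eq0 (fun j => (e j)%:MP)) => k.
have := congr1 (mderiv k) ep0; rewrite raddf_sum mderiv0 => dep0.
rewrite -[RHS]dep0; apply: eq_bigr => i _.
by rewrite mul_mpolyC /= mderivZ.
Qed.

Lemma mderiv_quadratic_form (d : 'I_n -> 'I_n -> R) (k : 'I_n) :
  mderiv k (\sum_i \sum_j d i j *: (p i * p j))
  = \sum_m (\sum_j (d m j + d j m) *: p j) * mderiv k (p m).
Proof.
have Leibniz i j : mderiv k (d i j *: (p i * p j))
    = d i j *: p j * mderiv k (p i) + d i j *: p i * mderiv k (p j).
  by rewrite mderivZ mderivM scalerDr -!scalerAl mulrC addrC.
rewrite raddf_sum /=; under eq_bigr do rewrite raddf_sum /=.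
under eq_bigr do under eq_bigr do rewrite Leibniz.
under [RHS]eq_bigr do rewrite mulr_suml.
under [RHS]eq_bigr do under eq_bigr do rewrite scalerDl mulrDl.
under eq_bigr do rewrite big_split.
under [RHS]eq_bigr do rewrite big_split.
rewrite !big_split /=.
by congr (_ + _); rewrite exchange_big.
Qed.

Lemma quadratic_relation_skew (d : 'I_n -> 'I_n -> R) :
  \sum_i \sum_j d i j *: (p i * p j) = 0 -> forall i j, d i j + d j i = 0.
Proof.
move=> dpp0 i; apply: free_of_jacobian; move: i.
apply: jacobian_comb_eq0 => k.
by rewrite -mderiv_quadratic_form dpp0 mderiv0.
Qed.

Lemma sym_products_free (c : 'I_n -> 'I_n -> R) :
  (2 \notin [pchar R])%N ->
  \sum_(i < n) \sum_(j < n | (i <= j)%N) c i j *: (p i * p j) = 0 ->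
  forall i j : 'I_n, (i <= j)%N -> c i j = 0.
Proof.
move=> char2 cpp0 i j le_ij.
pose d (a b : 'I_n) := if (a <= b)%N then c a b else 0.
have dpp0 : \sum_a \sum_b d a b *: (p a * p b) = 0.
  rewrite -[RHS]cpp0; apply: eq_bigr => a _; rewrite [RHS]big_mkcond.
  by apply: eq_bigr => b _; rewrite /d; case: ifP; rewrite ?scale0r.
have := @quadratic_relation_skew d dpp0 i j; rewrite /d le_ij.
case: ltngtP le_ij => // [lt_ij | /val_inj <-] _; first by rewrite addr0.
move/eqP; rewrite -mulr2n -mulr_natr mulf_eq0 => /orP[/eqP // | two0].
by move: char2; rewrite inE /= two0.
Qed.

End JacobianCriterion.

Theorem lemma8p3 (K : fieldType)
  (hchar : [/\ (2 \notin [pchar K])%N, (3 \notin [pchar K])%N & (5 \notin [pchar K])%N])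
  (phi : 'M[{mpoly K[5]}]_5)
  (hlin : forall i j, phi i j \is 1.-homog)
  (halt : alternating phi)
  (hS : Sinv phi != 0) :
  forall c : 'I_5 -> 'I_5 -> K,
    \sum_(i < 5) \sum_(j < 5 | (i <= j)%N) c i j *: (pfaff5 phi i * pfaff5 phi j) = 0 ->
    forall i j : 'I_5, (i <= j)%N -> c i j = 0.
Proof.
move=> c; case: hchar => char2 _ _.
exact: (@sym_products_free K 5 (pfaff5 phi) hS c char2).
Qed.
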